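(* In the setting below, for all limit ordinals $\alpha<\beta$ and all natural numbers $n\geq0$, $M_{\alpha+n}\subseteq M_{\beta+n}$.
   Context: Work in ZFA (ZF with a set $A$ of atoms, i.e. urelements that have no elements), extended by a primitive binary relation $\preccurlyeq$ on $A$, with Separation and Replacement holding for formulas mentioning $\preccurlyeq$. $A$ is an infinite set of atoms and $\preccurlyeq$ is a pre-ordering (reflexive, transitive) on $A$ with no minimal elements: for every $a\in A$ there is $b\in A$ with $b\preccurlyeq a$ and not $a\preccurlyeq b$. For $a\in A$, $pr(a)=\{b\in A:b\preccurlyeq a\}$; $LO(A,\preccurlyeq)$ is the set of nonempty $x\subseteq A$ with $pr(a)\subseteq x$ for all $a\in x$. For a set $X$ of sets, $LO(X,\subseteq)$ is the set of nonempty $x\subseteq X$ such that for every $y\in x$ and every $z\in X$ with $z\subseteq y$, $z\in x$. The magmatic hierarchy: $M_1=LO(A,\preccurlyeq)$; $M_{\alpha+1}=LO(M_\alpha,\subseteq)$ for $\alpha\geq1$; $M_\alpha=\bigcup_{1\leq\beta<\alpha}M_\beta$ for limit $\alpha$; $M=\bigcup_{\alpha\geq1}M_\alpha$. Limit ordinals are nonzero. *)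

(* A model of ZFA-style sets with atoms (Aczel-style
   well-founded trees with urelements, modulo extensional equality), and
   ordinals represented as elements of an arbitrary well-ordered type. *)
From Stdlib Require Import List Relations Wellfounded.

Set Implicit Arguments.

Inductive V (A : Type) : Type :=
| Atom : A -> V A
| Sett : forall I : Type, (I -> V A) -> V A.

Arguments Atom {A} _.
Arguments Sett {A} _ _.

Section ZFA.
Variable A : Type.

Fixpoint eqV (x y : V A) {struct x} : Prop :=
  match x, y with
  | Atom a, Atom b => a = b
  | @Sett _ I0 f, @Sett _ J g =>
      (forall i, exists j, eqV (f i) (g j)) /\
      (forall j, exists i, eqV (f i) (g j))
  | _, _ => False
  end.

Definition memV (x y : V A) : Prop :=
  match y with
  | Atom _ => False
  | @Sett _ I0 f => exists i, eqV x (f i)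
  end.

Definition subV (z y : V A) : Prop := forall w, memV w z -> memV w y.

Definition isSet (x : V A) : Prop :=
  match x with @Sett _ _ _ => True | Atom _ => False end.

Definition LO_atoms (le : A -> A -> Prop) (x : V A) : Prop :=
  isSet x /\ (exists w, memV w x) /\
  (forall w, memV w x -> exists a, eqV w (Atom a)) /\
  (forall a b, memV (Atom a) x -> le b a -> memV (Atom b) x).

Definition LO_sub (X : V A -> Prop) (x : V A) : Prop :=
  isSet x /\ (exists w, memV w x) /\
  (forall w, memV w x -> X w) /\
  (forall y z, memV y x -> X z -> subV z y -> memV z x).
End ZFA.

Record wordType := WordType {
  wsort :> Type;
  wlt : wsort -> wsort -> Prop;
  wlt_wf : well_founded wlt;
  wlt_trans : forall x y z, wlt x y -> wlt y z -> wlt x z;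
  wlt_total : forall x y, wlt x y \/ x = y \/ wlt y x
}.
Arguments wlt {w} _ _.

Section Ord.
Variable T : wordType.

Definition is_zero (t : T) : Prop := forall s : T, ~ wlt s t.
Definition is_succ (s t : T) : Prop :=
  wlt s t /\ forall u : T, ~ (wlt s u /\ wlt u t).
Definition is_one (t : T) : Prop := exists s : T, is_zero s /\ is_succ s t.
Definition is_limit (t : T) : Prop := ~ is_zero t /\ ~ (exists s : T, is_succ s t).

Fixpoint is_add (a : T) (n : nat) (t : T) : Prop :=
  match n with
  | O => t = a
  | S m => exists s : T, is_add a m s /\ is_succ s t
  end.
End Ord.
Arguments is_zero {T} _.
Arguments is_succ {T} _ _.
Arguments is_one {T} _.
Arguments is_limit {T} _.
Arguments is_add {T} _ _ _.

(** * The magmatic hierarchy, indexed by T (index 0 unused) *)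
Definition mag_step (A : Type) (le : A -> A -> Prop) (T : wordType)
  (t : T) (rec : forall s : T, wlt s t -> V A -> Prop) (x : V A) : Prop :=
  (is_one t /\ LO_atoms le x) \/
  (exists s (h : wlt s t), is_succ s t /\ ~ is_zero s /\ LO_sub (rec s h) x) \/
  (is_limit t /\ exists s (h : wlt s t), ~ is_zero s /\ rec s h x).

Definition Mag (A : Type) (le : A -> A -> Prop) (T : wordType) : T -> V A -> Prop :=
  Fix (@wlt_wf T) (fun _ => V A -> Prop) (@mag_step A le T).
Arguments Mag {A} le {T} _ _.

(** The heart of the argument is that each level absorbs the subsets it meets:
    if [u ∈ M_δ], [w ∈ M_γ] and [u ⊆ w], then [u ∈ M_γ].  Every element of
    [M_t] already lies in some [M_s] with [s] equal to [1] or a successor and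
    either [s = t] or [t] a limit above [s]; after pushing [u] and [w] down in
    this way, the case [1] against [σ + 1] is impossible (atoms against sets),
    and two successor levels [LO(M_δ', ⊆)], [LO(M_γ', ⊆)] are handled by
    induction on [max(γ', δ')].

    The theorem then follows by induction on [n]: [M_α] is a union of levels
    below [α < β], hence contained in [M_β]; and a member [x] of
    [M_{α+n+1} = LO(M_{α+n}, ⊆)] has its elements in [M_{β+n}] by induction,
    while absorption puts any [z ∈ M_{β+n}] below an element of [x] back in
    [M_{α+n}], so [x] is downward closed in [M_{β+n}]. *)
From Stdlib Require Import List FunctionalExtensionality.

Set Implicit Arguments.
Unset Strict Implicit.

Section LowerSets.
Variables (A : Type) (le : A -> A -> Prop).

Lemma LO_sub_transfer (P Q : V A -> Prop) (u : V A) :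
  (forall y, memV y u -> Q y) ->
  (forall z y, Q z -> P y -> subV z y -> P z) ->
  LO_sub P u -> LO_sub Q u.
Proof.
  intros HuQ HQP [Hset [Hne [HuP Hdown]]].
  split; [exact Hset | split; [exact Hne | split; [exact HuQ |]]].
  intros y z Hy Hz Hzy.
  exact (Hdown y z Hy (HQP z y Hz (HuP y Hy) Hzy) Hzy).
Qed.

Lemma LO_sub_mem (P : V A -> Prop) (x y : V A) : LO_sub P x -> memV y x -> P y.
Proof. intros [_ [_ [HxP _]]]; exact (HxP y). Qed.

Lemma LO_atoms_LO_sub_disjoint (P : V A -> Prop) (x y c : V A) :
  (forall z, P z -> isSet z) ->
  LO_atoms le x -> LO_sub P y -> memV c x -> memV c y -> False.
Proof.
  intros HPset [_ [_ [Hatoms _]]] [_ [_ [HyP _]]] Hcx Hcy.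
  destruct (Hatoms c Hcx) as [a Ha].
  pose proof (HPset c (HyP c Hcy)) as Hc.
  destruct c; simpl in *; tauto.
Qed.

End LowerSets.

Section Magmatic.
Variables (A : Type) (le : A -> A -> Prop) (T : wordType).

Definition leT (s t : T) : Prop := wlt s t \/ s = t.

Lemma lt_leT_trans (r s t : T) : wlt r s -> leT s t -> wlt r t.
Proof. intros Hrs [Hst | <-]; [exact (wlt_trans T _ _ _ Hrs Hst) | exact Hrs]. Qed.

Lemma leT_trans (r s t : T) : leT r s -> leT s t -> leT r t.
Proof. intros [Hrs | <-] Hst; [left; exact (lt_leT_trans Hrs Hst) | exact Hst]. Qed.

Lemma leT_nonzero (s t : T) : ~ is_zero s -> leT s t -> ~ is_zero t.
Proof. intros Hs [Hst | <-] Ht; [exact (Ht s Hst) | exact (Hs Ht)]. Qed.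

Lemma upper_bound_of_two (x y : T) :
  exists m, (m = x \/ m = y) /\ leT x m /\ leT y m.
Proof.
  destruct (wlt_total T x y) as [Hxy | [<- | Hyx]].
  - exists y; unfold leT; auto.
  - exists x; unfold leT; auto.
  - exists x; unfold leT; auto.
Qed.

Lemma succ_unique (s s' t : T) : is_succ s t -> is_succ s' t -> s = s'.
Proof.
  intros [Hst Hs] [Hs't Hs'].
  destruct (wlt_total T s s') as [Hlt | [Heq | Hlt]]; [| exact Heq |].
  - exfalso; exact (Hs s' (conj Hlt Hs't)).
  - exfalso; exact (Hs' s (conj Hlt Hst)).
Qed.

Lemma is_add_leT (a : T) (n : nat) (t : T) : is_add a n t -> leT a t.
Proof.
  revert t; induction n as [| n IH]; simpl; intros t Ht.
  - right; symmetry; exact Ht.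
  - destruct Ht as [s [Has [Hst _]]].
    left; destruct (IH s Has) as [Hlt | <-]; [exact (wlt_trans T _ _ _ Hlt Hst) | exact Hst].
Qed.

Lemma Mag_unfold (t : T) : Mag le t = mag_step le T t (fun s _ => Mag le s).
Proof.
  apply (Fix_eq (wlt_wf T) (fun _ => V A -> Prop) (mag_step le T)).
  intros s f g Hfg; f_equal.
  apply functional_extensionality_dep; intro r.
  apply functional_extensionality_dep; intro Hr.
  apply Hfg.
Qed.

Lemma Mag_inv (t : T) (x : V A) : Mag le t x ->
  (is_one t /\ LO_atoms le x) \/
  (exists s, is_succ s t /\ ~ is_zero s /\ LO_sub (Mag le s) x) \/
  (is_limit t /\ exists s, wlt s t /\ ~ is_zero s /\ Mag le s x).
Proof.
  rewrite Mag_unfold; unfold mag_step.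
  intros [H | [[s [_ H]] | [Ht [s [Hs H]]]]]; eauto 10.
Qed.

Lemma Mag_one (t : T) (x : V A) : is_one t -> LO_atoms le x -> Mag le t x.
Proof. intros; rewrite Mag_unfold; left; auto. Qed.

Lemma Mag_succ (s t : T) (x : V A) :
  is_succ s t -> ~ is_zero s -> LO_sub (Mag le s) x -> Mag le t x.
Proof. intros Hst Hs Hx; rewrite Mag_unfold; right; left; exists s, (proj1 Hst); auto. Qed.

Lemma Mag_lim (s t : T) (x : V A) :
  is_limit t -> wlt s t -> ~ is_zero s -> Mag le s x -> Mag le t x.
Proof. intros Ht Hst Hs Hx; rewrite Mag_unfold; right; right; split; [| exists s, Hst]; auto. Qed.

Lemma Mag_succE (s t : T) (x : V A) :
  is_succ s t -> ~ is_zero s -> Mag le t x -> LO_sub (Mag le s) x.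
Proof.
  intros Hst Hs Hx.
  destruct (Mag_inv Hx) as [[[z [Hz Hzt]] _] | [[s' [Hs't [_ Hlo]]] | [[_ Hlim] _]]].
  - exfalso; rewrite <- (succ_unique Hzt Hst) in Hs; exact (Hs Hz).
  - rewrite (succ_unique Hs't Hst) in Hlo; exact Hlo.
  - exfalso; exact (Hlim (ex_intro _ s Hst)).
Qed.

Lemma Mag_limitE (t : T) (x : V A) :
  is_limit t -> Mag le t x -> exists s, wlt s t /\ ~ is_zero s /\ Mag le s x.
Proof.
  intros [_ Hnsucc] Hx.
  destruct (Mag_inv Hx) as [[[z [_ Hzt]] _] | [[s [Hst _]] | [_ H]]]; [| | exact H].
  - exfalso; exact (Hnsucc (ex_intro _ z Hzt)).
  - exfalso; exact (Hnsucc (ex_intro _ s Hst)).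
Qed.

Definition eq_or_limit_above (s t : T) : Prop := s = t \/ is_limit t /\ wlt s t.

Definition Mag_nonlimit (s : T) (x : V A) : Prop :=
  (is_one s /\ LO_atoms le x) \/
  (exists s', is_succ s' s /\ ~ is_zero s' /\ LO_sub (Mag le s') x).

Lemma Mag_nonlimit_set (s : T) (x : V A) :
  Mag_nonlimit s x -> isSet x /\ exists w, memV w x.
Proof. intros [[_ [Hset [Hne _]]] | [_ [_ [_ [Hset [Hne _]]]]]]; auto. Qed.

Lemma Mag_normal (t : T) (x : V A) : Mag le t x ->
  exists s, eq_or_limit_above s t /\ Mag_nonlimit s x.
Proof.
  revert x; induction t as [t IH] using (well_founded_ind (wlt_wf T)); intros x Hx.
  destruct (Mag_inv Hx) as [Hone | [Hsucc | [Hlim [r [Hrt [_ Hr]]]]]].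
  - exists t; split; [left | left]; auto.
  - exists t; split; [left | right]; auto.
  - destruct (IH r Hrt x Hr) as [s [Hsr Hs]].
    exists s; split; [right; split; [exact Hlim |] | exact Hs].
    destruct Hsr as [-> | [_ Hsr]]; [exact Hrt | exact (wlt_trans T _ _ _ Hsr Hrt)].
Qed.

Lemma eq_or_limit_above_leT (s t : T) : eq_or_limit_above s t -> leT s t.
Proof. intros [-> | [_ Hst]]; [right | left]; auto. Qed.

Lemma Mag_lift (s t : T) (x : V A) :
  eq_or_limit_above s t -> Mag_nonlimit s x -> Mag le t x.
Proof.
  intros Hst Hs.
  assert (Hx : Mag le s x).
  { destruct Hs as [[Hone Hat] | [s' [Hs's [Hs' Hlo]]]];
      [exact (Mag_one Hone Hat) | exact (Mag_succ Hs's Hs' Hlo)]. }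
  assert (Hs0 : ~ is_zero s).
  { destruct Hs as [[[z [_ [Hzs _]]] _] | [s' [[Hs's _] _]]]; intro Hz;
      [exact (Hz z Hzs) | exact (Hz s' Hs's)]. }
  destruct Hst as [<- | [Hlim Hlt]]; [exact Hx | exact (Mag_lim Hlim Hlt Hs0 Hx)].
Qed.

Lemma Mag_isSet (t : T) (x : V A) : Mag le t x -> isSet x.
Proof. intro Hx; destruct (Mag_normal Hx) as [s [_ Hs]]; exact (proj1 (Mag_nonlimit_set Hs)). Qed.

Lemma Mag_nonempty (t : T) (x : V A) : Mag le t x -> exists w, memV w x.
Proof. intro Hx; destruct (Mag_normal Hx) as [s [_ Hs]]; exact (proj2 (Mag_nonlimit_set Hs)). Qed.

Definition Mag_subset_closed (g d : T) : Prop :=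
  forall u w, Mag le d u -> Mag le g w -> subV u w -> Mag le g u.

Lemma Mag_subset_closed_below (e : T) :
  forall g d, leT g e -> leT d e -> Mag_subset_closed g d.
Proof.
  induction e as [e IH] using (well_founded_ind (wlt_wf T)).
  intros g d Hge Hde u w Hu Hw Huw.
  destruct (Mag_normal Hu) as [d0 [Hd0 Bu]].
  destruct (Mag_normal Hw) as [g0 [Hg0 Bw]].
  apply (Mag_lift Hg0).
  destruct (Mag_nonempty Hu) as [c Hcu].
  pose proof (Huw c Hcu) as Hcw.
  destruct Bw as [[Hone Wat] | [g' [Hg'g0 [Hg' Wlo]]]];
    destruct Bu as [[_ Uat] | [d' [Hd'd0 [Hd' Ulo]]]].
  - left; split; assumption.
  - exfalso; exact (LO_atoms_LO_sub_disjoint (@Mag_isSet d') Wat Ulo Hcw Hcu).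
  - exfalso; exact (LO_atoms_LO_sub_disjoint (@Mag_isSet g') Uat Wlo Hcu Hcw).
  - right; exists g'; split; [exact Hg'g0 | split; [exact Hg' |]].
    apply (LO_sub_transfer (P := Mag le d')); [| | exact Ulo].
    + intros y Hy; exact (LO_sub_mem Wlo (Huw y Hy)).
    + pose proof (lt_leT_trans (proj1 Hg'g0) (leT_trans (eq_or_limit_above_leT Hg0) Hge)) as Hg'e.
      pose proof (lt_leT_trans (proj1 Hd'd0) (leT_trans (eq_or_limit_above_leT Hd0) Hde)) as Hd'e.
      destruct (upper_bound_of_two g' d') as [m [Hm [Hg'm Hd'm]]].
      intros z y Hz Hy Hzy.
      apply (IH m) with (g := d') (d := g') (w := y); auto.
      destruct Hm as [-> | ->]; assumption.
Qed.

Lemma Mag_subset_closed_all (g d : T) : Mag_subset_closed g d.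
Proof.
  destruct (upper_bound_of_two g d) as [m [_ [Hg Hd]]].
  exact (Mag_subset_closed_below Hg Hd).
Qed.

End Magmatic.

Theorem lemma4p7 (A : Type) (le : A -> A -> Prop)
  (A_infinite : forall l : list A, exists a, ~ In a l)
  (le_refl : forall a, le a a)
  (le_trans : forall a b c, le a b -> le b c -> le a c)
  (no_min : forall a, exists b, le b a /\ ~ le a b)
  (T : wordType) (alpha beta : T)
  (Halpha : is_limit alpha) (Hbeta : is_limit beta) (Hab : wlt alpha beta)
  (n : nat) (an bn : T) (Han : is_add alpha n an) (Hbn : is_add beta n bn) :
  forall x : V A, Mag le an x -> Mag le bn x.
Proof.
  revert an bn Han Hbn; induction n as [| n IH]; simpl; intros an bn Han Hbn x Hx.
  - subst an bn.
    destruct (Mag_limitE Halpha Hx) as [s [Hs [Hs0 Hsx]]].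
    exact (Mag_lim Hbeta (wlt_trans T _ _ _ Hs Hab) Hs0 Hsx).
  - destruct Han as [a' [Ha' Ha'an]], Hbn as [b' [Hb' Hb'bn]].
    assert (Ha'0 : ~ is_zero a') by exact (leT_nonzero (proj1 Halpha) (is_add_leT Ha')).
    assert (Hb'0 : ~ is_zero b') by exact (leT_nonzero (proj1 Hbeta) (is_add_leT Hb')).
    pose proof (Mag_succE Ha'an Ha'0 Hx) as Hlo.
    apply (Mag_succ Hb'bn Hb'0), (LO_sub_transfer (P := Mag le a')); [| | exact Hlo].
    + intros y Hy; exact (IH a' b' Ha' Hb' y (LO_sub_mem Hlo Hy)).
    + intros z y Hz Hy Hzy; exact (Mag_subset_closed_all Hz Hy Hzy).
Qed.
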